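(* Let $0<v_T<\tfrac12$, $V_u>0$, $g>0$ and $k\ge 0$ (real). Let $L_{g,k}$ be the line through the points $(V_u/(k+1),0)$ and $(0,-gV_u)$, i.e. the graph of $v\mapsto g(k+1)v-gV_u$. Then the central cell fires when $v_u$ is raised from $0$ to $V_u$ if and only if both of the following hold: (1) $L_{g,k}$ lies strictly below the critical segment, i.e. $g(k+1)v-gV_u<F(v)$ for all $v\in[v_{\min},v_i]$; and (2) the slope of $L_{g,k}$ is less than $F'(v_i)$, i.e. $g(k+1)<F'(v_i)$.
   Context: Fix $v_T\in(0,\tfrac12)$ and let $F(v)=v(v-v_T)(1-v)$. Then $F$ has a local minimum at a point $v_{\min}$, a local maximum at a point $v_{\max}$, and an inflection point at $v_i=(1+v_T)/3$, with $0<v_{\min}<v_T<v_i<v_{\max}<1$. The critical segment is the part of the graph of $F$ over $[v_{\min},v_i]$. Central-cell model: for parameters $g>0$ (gap-junction conductance), $k\ge 0$ (real; ratio of total downstream to upstream conductance) and upstream voltage $v_u$, the voltage $v$ of the central cell obeys $\frac{dv}{dt}=F(v)+g(v_u-v)-gkv$. Its equilibria are the solutions of $F(v)=g(k+1)v-gv_u$. Firing: given $V_u>0$, the central cell is said to fire when $v_u$ is raised from $0$ to $V_u$ if there is a threshold–rest collision at some $v_{u,c}\in(0,V_u)$, meaning: there exist $v_{u,c}\in(0,V_u)$ and $v^*\in(v_{\min},v_i)$ with $F(v^* )=g(k+1)v^*-gv_{u,c}$ and $F'(v^* )=g(k+1)$ (at $v_u=v_{u,c}$ the two smallest equilibria,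 rest and threshold, coalesce in a saddle-node bifurcation and disappear as $v_u$ increases further). *)

From Stdlib Require Import Reals Lra.
Open Scope R_scope.

Definition F (vT v : R) : R := v * (v - vT) * (1 - v).

Definition dF (vT v : R) : R := -3 * v ^ 2 + 2 * (1 + vT) * v - vT.

Lemma dF_is_derivative (vT v : R) : derivable_pt_lim (F vT) v (dF vT v).
Proof.
  pose proof (derivable_pt_lim_mult _ _ v _ _
    (derivable_pt_lim_mult _ _ v _ _ (derivable_pt_lim_id v)
       (derivable_pt_lim_minus _ _ v _ _ (derivable_pt_lim_id v) (derivable_pt_lim_const vT v)))
    (derivable_pt_lim_minus _ _ v _ _ (derivable_pt_lim_const 1 v) (derivable_pt_lim_id v))) as H.
  unfold mult_fct, minus_fct, fct_cte, id in H.
  replace (dF vT v) with ((1 * (v - vT) + v * (1 - 0)) * (1 - v) + v * (v - vT) * (0 - 1))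
    by (unfold dF; ring).
  exact H.
Qed.

(* Local minimum of F: the smaller root of F'. *)
Definition v_min (vT : R) : R :=
  ((1 + vT) - sqrt ((1 + vT) ^ 2 - 3 * vT)) / 3.

(* Local maximum of F: the larger root of F'. *)
Definition v_max (vT : R) : R :=
  ((1 + vT) + sqrt ((1 + vT) ^ 2 - 3 * vT)) / 3.

Definition v_i (vT : R) : R := (1 + vT) / 3.

(* The central cell fires when v_u is raised from 0 to Vu: a threshold-rest
   collision (saddle node on the critical segment) at some v_uc in (0, Vu). *)
Definition fires (vT g k Vu : R) : Prop :=
  exists vuc vstar : R,
    0 < vuc < Vu /\ v_min vT < vstar < v_i vT /\
    F vT vstar = g * (k + 1) * vstar - g * vuc /\
    dF vT vstar = g * (k + 1).

(* On the left of the inflection point F is convex, so on the critical segment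
   every tangent of F lies below F.  A saddle node at v* is a tangency of F with
   a line of slope g(k+1); firing at some v_uc < V_u therefore means that a
   tangent with that slope exists over (v_min, v_i) and lies above L_{g,k},
   which gives (1) and (2).  Conversely F' increases from 0 at v_min to its
   maximum F'(v_i), so under (2) it takes the value g(k+1) at a unique v* in
   (v_min, v_i); the tangent there has negative intercept -g v_uc, and (1) at
   v* forces v_uc < V_u. *)

From Stdlib Require Import Reals Lra Psatz.
Open Scope R_scope.

Lemma F_sub_tangent (vT v w : R) :
  F vT v - (F vT w + dF vT w * (v - w)) = (v - w) ^ 2 * (1 + vT - v - 2 * w).
Proof. unfold F, dF; ring. Qed.

Lemma tangent_le_F (vT v w : R) :
  w < v_i vT -> v <= v_i vT -> F vT w + dF vT w * (v - w) <= F vT v.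
Proof.
  unfold v_i; intros Hw Hv.
  assert (Hgap : 0 <= (v - w) ^ 2 * (1 + vT - v - 2 * w)).
  { apply Rmult_le_pos; [apply pow2_ge_0 | lra]. }
  rewrite <- F_sub_tangent in Hgap; lra.
Qed.

Lemma tangent_intercept_neg (vT w : R) :
  0 < w < v_i vT -> F vT w - dF vT w * w < 0.
Proof.
  unfold v_i; intros Hw.
  replace (F vT w - dF vT w * w) with (w ^ 2 * (2 * w - (1 + vT)))
    by (unfold F, dF; ring).
  assert (0 < w ^ 2) by (apply pow_lt; lra).
  nra.
Qed.

Lemma dF_v_i_sub (vT w : R) :
  dF vT (v_i vT) - dF vT w = 3 * (w - v_i vT) ^ 2.
Proof. unfold dF, v_i; field. Qed.

Lemma dF_lt_dF_v_i (vT w : R) : w <> v_i vT -> dF vT w < dF vT (v_i vT).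
Proof.
  intros Hw.
  assert (0 < (w - v_i vT) ^ 2) by (simpl; rewrite Rmult_1_r; apply Rsqr_pos_lt; lra).
  pose proof (dF_v_i_sub vT w); lra.
Qed.

Lemma v_min_eq (vT : R) : v_min vT = v_i vT - sqrt (dF vT (v_i vT) / 3).
Proof.
  replace (dF vT (v_i vT) / 3) with (((1 + vT) ^ 2 - 3 * vT) / 3 ^ 2)
    by (unfold dF, v_i; field).
  rewrite sqrt_div_alt, sqrt_pow2 by lra.
  unfold v_min, v_i; field.
Qed.

Lemma v_min_pos (vT : R) : 0 < vT -> 0 < v_min vT.
Proof.
  intros HvT; unfold v_min.
  assert (sqrt ((1 + vT) ^ 2 - 3 * vT) < sqrt ((1 + vT) ^ 2)).
  { apply sqrt_lt_1_alt; nra. }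
  rewrite sqrt_pow2 in * by lra; lra.
Qed.

Lemma dF_onto_critical (vT s : R) :
  0 < s < dF vT (v_i vT) -> exists w, v_min vT < w < v_i vT /\ dF vT w = s.
Proof.
  intros Hs.
  set (e := (dF vT (v_i vT) - s) / 3).
  assert (He : 0 < e) by (unfold e; lra).
  exists (v_i vT - sqrt e); split; [split|].
  - rewrite v_min_eq.
    assert (sqrt e < sqrt (dF vT (v_i vT) / 3)) by (apply sqrt_lt_1_alt; unfold e; split; lra).
    lra.
  - pose proof (sqrt_lt_R0 e He); lra.
  - pose proof (dF_v_i_sub vT (v_i vT - sqrt e)) as Hsub.
    replace ((v_i vT - sqrt e - v_i vT) ^ 2) with (sqrt e * sqrt e) in Hsub by ring.
    rewrite sqrt_sqrt in Hsub by lra.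
    assert (3 * e = dF vT (v_i vT) - s) by (unfold e; field).
    lra.
Qed.

Lemma fires_line_below (vT g k Vu : R) :
  0 < g -> fires vT g k Vu ->
  forall v, v <= v_i vT -> g * (k + 1) * v - g * Vu < F vT v.
Proof.
  intros Hg [vuc [w [Hvuc [Hw [HFw HdFw]]]]] v Hv.
  pose proof (tangent_le_F vT v w (proj2 Hw) Hv) as Htangent.
  rewrite HdFw, HFw in Htangent.
  assert (g * vuc < g * Vu) by (apply Rmult_lt_compat_l; lra).
  lra.
Qed.

Lemma fires_slope_lt (vT g k Vu : R) :
  fires vT g k Vu -> g * (k + 1) < dF vT (v_i vT).
Proof.
  intros [vuc [w [_ [Hw [_ HdFw]]]]].
  rewrite <- HdFw; apply dF_lt_dF_v_i; lra.
Qed.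

Lemma fires_of_line_below (vT g k Vu : R) :
  0 < vT -> 0 < g -> 0 <= k ->
  (forall v, v_min vT <= v <= v_i vT -> g * (k + 1) * v - g * Vu < F vT v) ->
  g * (k + 1) < dF vT (v_i vT) ->
  fires vT g k Vu.
Proof.
  intros HvT Hg Hk Hline Hslope.
  assert (Hs : 0 < g * (k + 1)) by nra.
  destruct (dF_onto_critical vT (g * (k + 1))) as [w [Hw HdFw]]; [lra|].
  pose proof (v_min_pos vT HvT) as Hmin.
  assert (Hintercept : F vT w - g * (k + 1) * w < 0).
  { rewrite <- HdFw; apply tangent_intercept_neg; lra. }
  assert (Hat_w : g * (k + 1) * w - g * Vu < F vT w) by (apply Hline; lra).
  exists ((g * (k + 1) * w - F vT w) / g), w.
  repeat split; try lra.
  - apply Rdiv_lt_0_compat; lra.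
  - apply (Rmult_lt_reg_l g); [lra|].
    replace (g * ((g * (k + 1) * w - F vT w) / g)) with (g * (k + 1) * w - F vT w)
      by (field; lra).
    lra.
  - field; lra.
Qed.

Theorem proposition2p1 (vT Vu g k : R) :
  0 < vT < 1 / 2 -> 0 < Vu -> 0 < g -> 0 <= k ->
  (fires vT g k Vu <->
   ((forall v : R, v_min vT <= v <= v_i vT ->
       g * (k + 1) * v - g * Vu < F vT v) /\
    g * (k + 1) < dF vT (v_i vT))).
Proof.
  intros HvT _ Hg Hk; split.
  - intros Hfires; split.
    + intros v Hv; apply (fires_line_below vT g k Vu); [exact Hg | exact Hfires | lra].
    + exact (fires_slope_lt vT g k Vu Hfires).
  - intros [Hline Hslope]; apply fires_of_line_below; auto; lra.
Qed.
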